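(* Let $M$ be a compact orientable $d$-dimensional manifold with piecewise smooth boundary, let $g_{[0]}$ be a Riemannian metric on $M$, let $\overline{E}$ be a fixed smooth symmetric $(0,2)$-tensor field on $M$, and for a real parameter $\alpha$ let $g_{[t]}=g_{[0]}+2\alpha\overline{E}$ (a Riemannian metric for $|\alpha|$ small), so that the Green strain tensor is $E=\tfrac12(g_{[t]}-g_{[0]})=\alpha\overline{E}$. Let $C$ be a stiffness tensor field for the reference metric $g_{[0]}$, and define the strain energy $W=\int_M \tfrac12 C(E,E)\,\upsilon_{[0]}$, where $\upsilon_{[0]}$ is the Riemannian volume form of $g_{[0]}$. Define the swapped states by taking $g_{[\hat 0]}=g_{[t]}$ as reference metric and $g_{[\hat t]}=g_{[0]}$ as current metric, with swapped strain $\hat E=\tfrac12(g_{[\hat t]}-g_{[\hat 0]})$, swapped volume form $\upsilon_{[\hat 0]}$ (the volume form of $g_{[t]}$), a swapped stiffness tensor field $\hat C$ (the stiffness tensor field for the reference metric $g_{[t]}$) satisfying $\hat C\in C+O(\alpha)$, and swapped strain energy $\hat W=\int_M\tfrac12\hat C(\hat E,\hat E)\,\upsilon_{[\hat 0]}$. Then $\hat W\in W+O(\alpha^3)$ as $\alpha\to 0$; i.e. $W$ and $\hat W$ agree up to a residual term of order $\alpha^3$.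
   Context: A stiffness tensor field is a $(4,0)$-tensor field $C=C^{ijkl}\partial_{u^i}\otimes\partial_{u^j}\otimes\partial_{u^k}\otimes\partial_{u^l}$ with $C^{ijkl}=C^{klij}=C^{jikl}=C^{ijlk}$; $C(E,E)=C^{ijkl}E_{ij}E_{kl}$. In the isotropic case, $C^{ijkl}=\lambda g^{*ij}g^{*kl}+\mu(g^{*ik}g^{*jl}+g^{*il}g^{*jk})$ with $g^*$ the dual of the reference metric and $\lambda,\mu$ the Lamé parameters. $O(\alpha^k)$ denotes the class of quantities bounded by a constant times $|\alpha|^k$ as $\alpha\to0$. *)

From HB Require Import structures.
From mathcomp Require Import all_boot all_order all_algebra.
From mathcomp Require Import all_classical all_reals all_analysis.
Set Implicit Arguments. Unset Strict Implicit. Unset Printing Implicit Defensive.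
Import Order.TTheory GRing.Theory Num.Theory.
Import numFieldNormedType.Exports.
Local Open Scope classical_set_scope.
Local Open Scope ring_scope.

(* Components of a (4,0)-tensor at a point, w.r.t. a frame of the tangent space. *)
Definition tensor4 (R : Type) (d : nat) := 'I_d -> 'I_d -> 'I_d -> 'I_d -> R.

Definition stiffness_sym (R : Type) (d : nat) (C : tensor4 R d) : Prop :=
  forall i j k l, C i j k l = C k l i j /\ C i j k l = C j i k l /\
                  C i j k l = C i j l k.

Definition tcontract (R : ringType) (d : nat) (C : tensor4 R d) (E : 'M[R]_d) : R :=
  \sum_(i < d) \sum_(j < d) \sum_(k < d) \sum_(l < d) C i j k l * E i j * E k l.

Section Elasticity.
Variables (R : realType) (d : nat) (dM : measure_display) (M : measurableType dM).
Variable mu : {measure set M -> \bar R}. (* the Riemannian volume measure of g_[0] *)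
Variables (g0 Ebar : M -> 'M[R]_d).

Definition metric_t (alpha : R) (p : M) : 'M[R]_d := g0 p + (2 * alpha) *: Ebar p.

Definition strain (alpha : R) (p : M) : 'M[R]_d := 2^-1 *: (metric_t alpha p - g0 p).

(* swapped strain  Ehat = 1/2 (g_[hat t] - g_[hat 0]) = 1/2 (g_[0] - g_[t]) *)
Definition strain_hat (alpha : R) (p : M) : 'M[R]_d := 2^-1 *: (g0 p - metric_t alpha p).

(* density of the volume form of g_[t] with respect to that of g_[0] *)
Definition vol_ratio (alpha : R) (p : M) : R :=
  Num.sqrt (\det (metric_t alpha p) / \det (g0 p)).

Definition strain_energy (C : M -> tensor4 R d) (alpha : R) : R :=
  Rintegral mu setT (fun p => 2^-1 * tcontract (C p) (strain alpha p)).

(* What = int_M 1/2 Chat(Ehat,Ehat) upsilon_[hat 0],  upsilon_[hat 0] = vol_ratio * upsilon_[0] *)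
Definition strain_energy_hat (Chat : R -> M -> tensor4 R d) (alpha : R) : R :=
  Rintegral mu setT
    (fun p => 2^-1 * tcontract (Chat alpha p) (strain_hat alpha p) * vol_ratio alpha p).

End Elasticity.

From HB Require Import structures.
From mathcomp Require Import all_boot all_order all_algebra perm.
From mathcomp Require Import all_classical all_reals all_analysis.
From mathcomp Require Import measurable_realfun ring lra.
Import Order.TTheory GRing.Theory Num.Theory.
Import numFieldNormedType.Exports.
Local Open Scope classical_set_scope.
Local Open Scope ring_scope.
Set Implicit Arguments. Unset Strict Implicit. Unset Printing Implicit Defensive.

(* Both strains are multiples of one tensor, E = alpha Ebar and Ehat = -alpha Ebar,
   so both energy densities are alpha^2/2 times a quadratic form in Ebar, and
   their difference is
     alpha^2/2 ((Chat - C)(Ebar, Ebar) rho + C(Ebar, Ebar) (rho - 1)),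
   where rho = sqrt (det g_[t] / det g_[0]) is the density of the swapped volume
   form.  Both brackets are O(alpha): the first by hypothesis, the second because
   det is locally Lipschitz, det g_[0] >= c^d by uniform positive definiteness
   (induction on Schur complements), and |sqrt x - 1| <= |x - 1|.  Integrating
   the pointwise O(alpha^3) bound over the finite volume of M gives the claim. *)

Definition coercive (R : numDomainType) n (c : R) (A : 'M[R]_n) :=
  forall v : 'rV_n, c * (v *m v^T) 0 0 <= (v *m A *m v^T) 0 0.

Lemma mul_rV_tr_ge0 (R : realDomainType) n (v : 'rV[R]_n) : 0 <= (v *m v^T) 0 0.
Proof. by rewrite mxE; apply: sumr_ge0 => j _; rewrite mxE -expr2 sqr_ge0. Qed.

Section SchurComplement.
Variables (R : realFieldType) (n : nat).
Variables (a : 'M[R]_1) (r : 'M[R]_(1, n)) (s : 'M[R]_(n, 1)) (D : 'M[R]_n).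

Definition schur_compl := D - (a 0 0)^-1 *: (s *m r).

Let mul_corner : s *m a = a 0 0 *: s.
Proof. by rewrite [a]mx11_scalar mul_mx_scalar -mx11_scalar. Qed.

Lemma schur_compl_tr : s^T = r -> D^T = D -> schur_compl^T = schur_compl.
Proof.
move=> sr DT; rewrite /schur_compl linearB /= linearZ /= trmx_mul DT.
by rewrite -sr trmxK.
Qed.

Lemma det_block_schur : a 0 0 != 0 ->
  \det (block_mx a r s D) = a 0 0 * \det schur_compl.
Proof.
move=> a0; pose L : 'M[R]_(1 + n) := block_mx 1 0 (- (a 0 0)^-1 *: s) 1.
have detL : \det L = 1 by rewrite det_lblock !det1 mulr1.
rewrite -[LHS]mul1r -detL -det_mulmx mulmx_block !mul1mx !mul0mx !addr0.
rewrite -scalemxAl mul_corner scalerA mulNr mulVf // scaleN1r addNr.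
by rewrite det_ublock det_mx11 /schur_compl addrC -scalemxAl scaleNr.
Qed.

Variable c : R.
Hypothesis block_coercive : coercive c (block_mx a r s D).

Lemma coercive_block_corner : c <= a 0 0.
Proof.
have := block_coercive (row_mx 1 0).
rewrite tr_row_mx mul_row_col mul_row_block !mul1mx !mul0mx !addr0.
by rewrite mul_row_col trmx0 mulmx0 addr0 trmx1 mulmx1 mxE eqxx mulr1n mulr1.
Qed.

(* Test coercivity of the block matrix on [(x, w)], with [x] chosen to cancel
   the first block column of [(x, w) *m A]. *)
Lemma coercive_schur_compl : 0 < c -> coercive c schur_compl.
Proof.
move=> c_gt0 w; have a0 : a 0 0 != 0.
  by rewrite lt0r_neq0 // (lt_le_trans c_gt0 coercive_block_corner).
pose x : 'rV_1 := - (a 0 0)^-1 *: (w *m s).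
have x_kills : x *m a + w *m s = 0.
  by rewrite /x -scalemxAl -mulmxA mul_corner -scalemxAr scalerA mulNr mulVf
    // scaleN1r addNr.
have := block_coercive (row_mx x w).
rewrite mul_row_block tr_row_mx !mul_row_col x_kills mul0mx add0r.
have -> : (x *m r + w *m D) *m w^T = w *m schur_compl *m w^T.
  rewrite /schur_compl /x mulmxBr mulmxBl mulmxDl.
  by rewrite -!scalemxAr -!scalemxAl !mulmxA addrC scaleNr.
apply: le_trans; rewrite ler_pM2l // [leRHS]mxE lerDr.
exact: mul_rV_tr_ge0.
Qed.

End SchurComplement.

Lemma det_coercive_ge (R : realFieldType) n (c : R) (A : 'M[R]_n) :
  0 < c -> A^T = A -> coercive c A -> c ^+ n <= \det A.
Proof.
move=> c_gt0; elim: n A => [|n IH] A; first by rewrite det_mx00 expr0.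
rewrite -(submxK (A : 'M[R]_(1 + n))).
move: (ulsubmx _) (ursubmx _) (dlsubmx _) (drsubmx _) => a r s D AT A_coer.
have /eq_block_mx [_ sr _ DT] := etrans (esym (tr_block_mx a r s D)) AT.
have a_ge := coercive_block_corner A_coer.
rewrite det_block_schur ?lt0r_neq0 ?(lt_le_trans c_gt0) // exprS.
rewrite ler_pM ?exprn_ge0 ?(ltW c_gt0) //.
by apply: IH; [exact: schur_compl_tr | exact: coercive_schur_compl].
Qed.

Lemma norm_prod_le (R : numDomainType) (I : Type) (s : seq I) (F : I -> R) (B : R) :
  (forall i, `|F i| <= B) -> `|\prod_(i <- s) F i| <= B ^+ size s.
Proof.
move=> F_le; elim: s => [|i s IH]; first by rewrite big_nil normr1.
by rewrite big_cons normrM exprS ler_pM.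
Qed.

Lemma norm_prodB_le (R : realDomainType) (I : Type) (s : seq I) (F G : I -> R)
    (B e : R) :
  1 <= B -> (forall i, `|F i| <= B) -> (forall i, `|G i| <= B) ->
  (forall i, `|F i - G i| <= e) ->
  `|\prod_(i <- s) F i - \prod_(i <- s) G i| <= (size s)%:R * B ^+ size s * e.
Proof.
move=> B_ge1 F_le G_le FG_le; elim: s => [|i s IH].
  by rewrite !big_nil subrr normr0 !mul0r.
rewrite !big_cons /=.
set P := \prod_(j <- s) F j; set Q := \prod_(j <- s) G j.
have -> : F i * P - G i * Q = (F i - G i) * P + G i * (P - Q) by ring.
have e_ge0 : 0 <= e := le_trans (normr_ge0 _) (FG_le i).
have Bs_ge1 : 1 <= B ^+ size s := exprn_ege1 _ B_ge1.
apply: le_trans (ler_normD _ _) _; rewrite !normrM.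
apply: le_trans (lerD (ler_pM _ _ (FG_le i) (norm_prod_le s F_le))
                      (ler_pM _ _ (G_le i) IH)) _ => //.
set k := size s; set Bk := B ^+ k.
have -> : (k.+1)%:R * B ^+ k.+1 * e = B * (Bk * e) + B * (k%:R * Bk * e).
  by rewrite exprS -natr1 -/Bk; ring.
by rewrite lerD2r [e * _]mulrC ler_peMl // mulr_ge0 // (le_trans ler01).
Qed.

Lemma det_addZ_lipschitz (R : realFieldType) n (Ba Bb : R) :
  exists2 K : R, 0 <= K & forall (A B : 'M[R]_n) (t : R),
    (forall i j, `|A i j| <= Ba) -> (forall i j, `|B i j| <= Bb) -> `|t| <= 1 ->
    `|\det (A + t *: B) - \det A| <= K * `|t|.
Proof.
pose N := 1 + `|Ba| + `|Bb|; pose k := size (index_enum 'I_n).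
exists (\sum_(s : {perm 'I_n}) k%:R * N ^+ k * `|Bb|).
  by apply: sumr_ge0 => s _; rewrite !mulr_ge0 ?exprn_ge0 // /N addr_ge0.
move=> A B t A_le B_le t_le1.
have N_ge1 : 1 <= N by rewrite /N; have := normr_ge0 Ba; have := normr_ge0 Bb; lra.
have A_le_N i j : `|A i j| <= N.
  by apply: le_trans (A_le i j) _; rewrite /N; have := ler_norm Ba;
    have := normr_ge0 Bb; lra.
have tB_le i j : `|t * B i j| <= `|Bb| * `|t|.
  by rewrite normrM mulrC ler_pM // (le_trans (B_le i j) (ler_norm _)).
have AtB_le_N i j : `|A i j + t * B i j| <= N.
  apply: le_trans (ler_normD _ _) _.
  have : `|Bb| * `|t| <= `|Bb| by rewrite ler_piMr.
  by have := A_le i j; have := tB_le i j; have := ler_norm Ba; rewrite /N; lra.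
rewrite /determinant -sumrB mulr_suml.
apply: le_trans (ler_norm_sum _ _ _) (ler_sum _ _) => s _.
rewrite -mulrBr normrM normrX normrN normr1 expr1n mul1r -(mulrA _ `|Bb|).
under eq_bigr do rewrite !mxE.
by apply: norm_prodB_le N_ge1 _ _ _ => i //; rewrite addrAC subrr add0r.
Qed.

Lemma sqrtr_dist1_le (R : rcfType) (x : R) : `|Num.sqrt x - 1| <= `|x - 1|.
Proof.
have [x_le0|x_gt0] := lerP x 0.
  by rewrite ler0_sqrtr // sub0r normrN normr1 ler0_norm; lra.
have -> : x - 1 = (Num.sqrt x - 1) * (Num.sqrt x + 1).
  by rewrite mulrDr mulr1 mulrBl mul1r -expr2 sqr_sqrtr ?ltW //; ring.
by rewrite normrM ler_peMr // ger0_norm; have := sqrtr_ge0 x; lra.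
Qed.

Lemma norm_sum_ord_le (R : numDomainType) n (F : 'I_n -> R) (B : R) :
  (forall i, `|F i| <= B) -> `|\sum_i F i| <= n%:R * B.
Proof.
move=> F_le; apply: le_trans (ler_norm_sum _ _ _) _.
apply: le_trans (ler_sum _ (fun i _ => F_le i)) _.
by rewrite sumr_const card_ord mulr_natl.
Qed.

Lemma tcontract_norm_le (R : realDomainType) d (T : tensor4 R d) (E : 'M[R]_d)
    (BT BE : R) :
  (forall i j k l, `|T i j k l| <= BT) -> (forall i j, `|E i j| <= BE) ->
  `|tcontract T E| <= d%:R ^+ 4 * (BT * BE ^+ 2).
Proof.
move=> T_le E_le; rewrite !exprS !expr0 !mulr1 -!mulrA.
do 4 apply: norm_sum_ord_le => ?.
by rewrite !normrM -mulrA ler_pM ?mulr_ge0 ?ler_pM.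
Qed.

Lemma tcontractBl (R : comRingType) d (T1 T2 : tensor4 R d) (E : 'M[R]_d) :
  tcontract T1 E - tcontract T2 E =
  tcontract (fun i j k l => T1 i j k l - T2 i j k l) E.
Proof.
rewrite /tcontract -sumrB; apply: eq_bigr => i _; rewrite -sumrB.
apply: eq_bigr => j _; rewrite -sumrB; apply: eq_bigr => k _; rewrite -sumrB.
by apply: eq_bigr => l _; rewrite !mulrBl.
Qed.

Lemma tcontractZ (R : comRingType) d (T : tensor4 R d) (E : 'M[R]_d) (x : R) :
  tcontract T (x *: E) = x ^+ 2 * tcontract T E.
Proof.
rewrite /tcontract mulr_sumr; apply: eq_bigr => i _; rewrite mulr_sumr.
apply: eq_bigr => j _; rewrite mulr_sumr; apply: eq_bigr => k _.
by rewrite mulr_sumr; apply: eq_bigr => l _; rewrite !mxE; ring.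
Qed.

Section FiniteMeasure.
Variables (R : realType) (dM : measure_display) (M : measurableType dM).
Variable mu : {measure set M -> \bar R}.
Hypothesis mu_fin : (mu setT < +oo)%E.

Lemma bounded_integrable (f : M -> R) (B : R) :
  measurable_fun setT f -> (forall x, `|f x| <= B) ->
  mu.-integrable setT (EFin \o f).
Proof.
move=> mf f_le; apply: measurable_bounded_integrable => //.
rewrite /bounded_near; near=> K => x _ /=; apply: le_trans (f_le x) _.
by near: K; apply: nbhs_pinfty_ge; rewrite num_real.
Unshelve. all: end_near. Qed.

Lemma norm_Rintegral_le (f : M -> R) (B : R) :
  measurable_fun setT f -> (forall x, `|f x| <= B) ->
  `|Rintegral mu setT f| <= B * fine (mu setT).
Proof.
move=> mf f_le.
have mnf : measurable_fun setT (fun x => `|f x|).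
  exact: measurableT_comp (@normr_measurable R setT) mf.
apply: le_trans (le_normr_Rintegral measurableT (bounded_integrable mf f_le)) _.
rewrite -Rintegral_cst //; apply: le_Rintegral => //.
- by apply: (bounded_integrable (B := B)) mnf _ => x; rewrite normr_id.
- by apply: (bounded_integrable (B := `|B|)) (measurable_cst _) _ => x.
Qed.

Lemma Rintegral_dist_le (f g : M -> R) (B e : R) :
  measurable_fun setT f -> measurable_fun setT g ->
  (forall x, `|g x| <= B) -> (forall x, `|f x - g x| <= e) ->
  `|Rintegral mu setT f - Rintegral mu setT g| <= e * fine (mu setT).
Proof.
move=> mf mg g_le fg_le.
have f_le x : `|f x| <= e + B.
  rewrite -[f x](subrK (g x)); apply: le_trans (ler_normD _ _) _.
  exact: lerD.
rewrite -RintegralB //; last 2 first.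
- exact: bounded_integrable mf f_le.
- exact: bounded_integrable mg g_le.
by apply: norm_Rintegral_le fg_le; exact: measurable_funB.
Qed.

End FiniteMeasure.

Section Measurability.
Variables (R : realType) (dM : measure_display) (M : measurableType dM) (d : nat).

Lemma measurable_tcontract (T : M -> tensor4 R d) (E : M -> 'M[R]_d) :
  (forall i j k l, measurable_fun setT (fun p => T p i j k l)) ->
  (forall i j, measurable_fun setT (fun p => E p i j)) ->
  measurable_fun setT (fun p => tcontract (T p) (E p)).
Proof.
move=> mT mE; do 4 apply: measurable_sum => ?.
by apply: measurable_funM => //; exact: measurable_funM.
Qed.

Lemma measurable_det (G : M -> 'M[R]_d) :
  (forall i j, measurable_fun setT (fun p => G p i j)) ->
  measurable_fun setT (fun p => \det (G p)).
Proof.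
move=> mG; apply: measurable_sum => s.
by apply: measurable_funM => //; exact: measurable_prod.
Qed.

Lemma measurable_funV_ge (f : M -> R) (m : R) : 0 < m -> (forall x, m <= f x) ->
  measurable_fun setT f -> measurable_fun setT (fun x => (f x)^-1).
Proof.
move=> m_gt0 f_ge mf.
have -> : (fun x => (f x)^-1) = (fun y => (Num.max y m)^-1) \o f.
  by apply/funext => x /=; rewrite max_l.
apply: measurableT_comp mf; apply: nonincreasing_measurable => // x y xy.
by rewrite lef_pV2 ?posrE ?lt_max ?m_gt0 ?orbT // ge_max !le_max xy lexx !orbT.
Qed.

Lemma measurable_sqrtr : measurable_fun setT (@Num.sqrt R).
Proof. by apply: nondecreasing_measurable => // x y; exact: ler_wsqrtr. Qed.

End Measurability.

Lemma swap_density_dist_le (R : realFieldType) (a th tc v Ka Kc Kv : R) :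
  0 <= Kv -> `|a| <= 1 -> `|th - tc| <= Ka * `|a| -> `|tc| <= Kc ->
  `|v - 1| <= Kv * `|a| ->
  `|2^-1 * (a ^+ 2 * th) * v - 2^-1 * (a ^+ 2 * tc)|
    <= 2^-1 * (Ka * (1 + Kv) + Kc * Kv) * `|a| ^+ 3.
Proof.
move=> Kv_ge0 a_le1 th_near tc_le v_near.
have v_le : `|v| <= 1 + Kv.
  rewrite -[v](subrK 1) addrC; apply: le_trans (ler_normD _ _) _.
  by rewrite normr1 lerD2l (le_trans v_near) // ler_piMr.
have sum_le :
    `|(th - tc) * v + tc * (v - 1)| <= (Ka * (1 + Kv) + Kc * Kv) * `|a|.
  apply: le_trans (ler_normD _ _) _; rewrite !normrM mulrDl -mulrAC.
  by rewrite -[Kc * _ * _]mulrA lerD ?ler_pM.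
have -> : 2^-1 * (a ^+ 2 * th) * v - 2^-1 * (a ^+ 2 * tc) =
    2^-1 * a ^+ 2 * ((th - tc) * v + tc * (v - 1)) by ring.
rewrite normrM normrM normrX ger0_norm ?invr_ge0 //.
have -> : 2^-1 * (Ka * (1 + Kv) + Kc * Kv) * `|a| ^+ 3 =
    2^-1 * `|a| ^+ 2 * ((Ka * (1 + Kv) + Kc * Kv) * `|a|) by rewrite exprSr; ring.
by apply: ler_wpM2l sum_le; rewrite mulr_ge0 ?exprn_ge0.
Qed.

Section SwappedStrainEnergy.
Variables (R : realType) (d : nat) (dM : measure_display) (M : measurableType dM).
Variables (g0 Ebar : M -> 'M[R]_d).

Lemma strainE alpha p : strain g0 Ebar alpha p = alpha *: Ebar p.
Proof.
by rewrite /strain /metric_t addrAC subrr add0r scalerA mulrA mulVf ?mul1r.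
Qed.

Lemma strain_hatE alpha p : strain_hat g0 Ebar alpha p = - alpha *: Ebar p.
Proof.
rewrite /strain_hat /metric_t opprD addrA subrr add0r scalerN scalerA mulrA.
by rewrite mulVf ?mul1r ?scaleNr // pnatr_eq0.
Qed.

Variables (c Bg BE : R).
Hypotheses (c_gt0 : 0 < c) (g0_sym : forall p, (g0 p)^T = g0 p).
Hypothesis g0_coercive : forall p, coercive c (g0 p).
Hypotheses (g0_le : forall p i j, `|g0 p i j| <= Bg)
           (Ebar_le : forall p i j, `|Ebar p i j| <= BE).
Hypotheses (g0_meas : forall i j, measurable_fun setT (fun p => g0 p i j))
           (Ebar_meas : forall i j, measurable_fun setT (fun p => Ebar p i j)).

Let det_g0_ge p : c ^+ d <= \det (g0 p).
Proof. exact: det_coercive_ge. Qed.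

Let det_g0_gt0 p : 0 < \det (g0 p).
Proof. exact: lt_le_trans (exprn_gt0 d c_gt0) (det_g0_ge p). Qed.

Lemma vol_ratio_dist1 : exists2 Kv : R, 0 <= Kv & forall alpha p,
  `|alpha| <= 2^-1 -> `|vol_ratio g0 Ebar alpha p - 1| <= Kv * `|alpha|.
Proof.
have [Kd Kd_ge0 det_near] := det_addZ_lipschitz d Bg BE.
exists (2 * Kd / c ^+ d); first by rewrite divr_ge0 ?mulr_ge0 ?exprn_ge0 // ltW.
move=> alpha p alpha_le; apply: le_trans (sqrtr_dist1_le _) _.
have two_alpha_le : `|2 * alpha| <= 1.
  by rewrite normrM ger0_norm //; lra.
have -> : \det (metric_t g0 Ebar alpha p) / \det (g0 p) - 1 =
    (\det (metric_t g0 Ebar alpha p) - \det (g0 p)) / \det (g0 p).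
  by field; exact: lt0r_neq0.
rewrite normrM normfV (gtr0_norm (det_g0_gt0 p)).
apply: le_trans (ler_pM _ _ (det_near _ _ _ (g0_le p) (Ebar_le p) two_alpha_le)
  (_ : _ <= (c ^+ d)^-1)) _ => //.
- by rewrite invr_ge0 ltW.
- by rewrite lef_pV2 ?posrE ?exprn_gt0.
by rewrite normrM ger0_norm //; lra.
Qed.

Lemma measurable_vol_ratio alpha : measurable_fun setT (vol_ratio g0 Ebar alpha).
Proof.
rewrite /vol_ratio; apply: measurableT_comp; first exact: measurable_sqrtr.
apply: measurable_funM; last first.
  exact: measurable_funV_ge (exprn_gt0 d c_gt0) det_g0_ge (measurable_det g0_meas).
apply: measurable_det => i j; rewrite /metric_t.
under eq_fun do rewrite !mxE.
by apply: measurable_funD => //; exact: measurable_funM.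
Qed.

Lemma measurable_strain alpha i j :
  measurable_fun setT (fun p => strain g0 Ebar alpha p i j).
Proof. by under eq_fun do rewrite strainE mxE; exact: measurable_funM. Qed.

Lemma measurable_strain_hat alpha i j :
  measurable_fun setT (fun p => strain_hat g0 Ebar alpha p i j).
Proof. by under eq_fun do rewrite strain_hatE mxE; exact: measurable_funM. Qed.

Variables (C : M -> tensor4 R d) (Chat : R -> M -> tensor4 R d) (BC K0 delta : R).
Hypothesis C_le : forall p i j k l, `|C p i j k l| <= BC.
Hypothesis Chat_near : forall alpha, `|alpha| < delta ->
  forall p i j k l, `|Chat alpha p i j k l - C p i j k l| <= K0 * `|alpha|.

Lemma energy_density_le alpha p :
  `|2^-1 * tcontract (C p) (strain g0 Ebar alpha p)|
    <= 2^-1 * alpha ^+ 2 * (d%:R ^+ 4 * (BC * BE ^+ 2)).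
Proof.
have coef_ge0 : 0 <= 2^-1 * alpha ^+ 2 :> R by rewrite mulr_ge0 ?invr_ge0 ?sqr_ge0.
rewrite strainE tcontractZ [in leLHS]mulrA normrM (ger0_norm coef_ge0).
by rewrite ler_wpM2l ?tcontract_norm_le.
Qed.

Lemma energy_density_swap_dist_le : exists K : R, forall alpha,
  `|alpha| < delta -> `|alpha| <= 2^-1 -> forall p,
  `|2^-1 * tcontract (Chat alpha p) (strain_hat g0 Ebar alpha p)
       * vol_ratio g0 Ebar alpha p
     - 2^-1 * tcontract (C p) (strain g0 Ebar alpha p)| <= K * `|alpha| ^+ 3.
Proof.
have [Kv Kv_ge0 vol_near] := vol_ratio_dist1.
pose Ka := d%:R ^+ 4 * (K0 * BE ^+ 2); pose Kc := d%:R ^+ 4 * (BC * BE ^+ 2).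
exists (2^-1 * (Ka * (1 + Kv) + Kc * Kv)) => alpha alpha_delta alpha_half p.
rewrite strainE strain_hatE !tcontractZ sqrrN.
apply: swap_density_dist_le => //.
- by apply: le_trans alpha_half _; rewrite invf_le1 ?ler1n.
- rewrite tcontractBl /Ka -mulrA [_ * `|alpha|]mulrAC.
  exact: tcontract_norm_le (Chat_near alpha_delta p) (Ebar_le p).
- exact: tcontract_norm_le (C_le p) (Ebar_le p).
- exact: vol_near.
Qed.

End SwappedStrainEnergy.

Unset Implicit Arguments.

Theorem mainTheorem1 (R : realType) (d : nat) (dM : measure_display)
  (M : measurableType dM) (mu : {measure set M -> \bar R})
  (g0 Ebar : M -> 'M[R]_d) (C : M -> tensor4 R d) (Chat : R -> M -> tensor4 R d) :
  (* compactness: finite total volume *)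
  (mu setT < +oo)%E ->
  (* g_[0] is a (uniformly) positive definite symmetric metric, bounded *)
  (forall p, (g0 p)^T = g0 p) ->
  (exists2 c : R, 0 < c & forall p (v : 'rV[R]_d),
      c * (v *m v^T) 0 0 <= (v *m g0 p *m v^T) 0 0) ->
  (exists B : R, forall p i j, `|g0 p i j| <= B) ->
  (forall i j, measurable_fun setT (fun p => g0 p i j)) ->
  (* Ebar is a bounded symmetric (0,2)-tensor field *)
  (forall p, (Ebar p)^T = Ebar p) ->
  (exists B : R, forall p i j, `|Ebar p i j| <= B) ->
  (forall i j, measurable_fun setT (fun p => Ebar p i j)) ->
  (* C is a bounded stiffness tensor field *)
  (forall p, stiffness_sym (C p)) ->
  (exists B : R, forall p i j k l, `|C p i j k l| <= B) ->
  (forall i j k l, measurable_fun setT (fun p => C p i j k l)) ->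
  (* Chat is a stiffness tensor field for each alpha, with Chat in C + O(alpha) *)
  (forall alpha p, stiffness_sym (Chat alpha p)) ->
  (forall alpha i j k l, measurable_fun setT (fun p => Chat alpha p i j k l)) ->
  (exists K : R, exists2 delta : R, 0 < delta & forall alpha : R, `|alpha| < delta ->
      forall p i j k l, `|Chat alpha p i j k l - C p i j k l| <= K * `|alpha|) ->
  (* conclusion: What in W + O(alpha^3) *)
  exists K : R, exists2 delta : R, 0 < delta & forall alpha : R, `|alpha| < delta ->
    `|strain_energy_hat mu g0 Ebar Chat alpha - strain_energy mu g0 Ebar C alpha|
      <= K * `|alpha| ^+ 3.
Proof.
move=> mu_fin g0_sym [c c_gt0 g0_coercive] [Bg g0_le] g0_meas _ [BE Ebar_le]
  Ebar_meas _ [BC C_le] C_meas _ Chat_meas [K0 [delta delta_gt0 Chat_near]].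
have [K density_near] := energy_density_swap_dist_le c_gt0 g0_sym g0_coercive
  g0_le Ebar_le C_le Chat_near.
exists (K * fine (mu setT)), (Num.min delta 2^-1).
  by rewrite lt_min delta_gt0 invr_gt0 ltr0n.
move=> alpha; rewrite lt_min => /andP[alpha_delta /ltW alpha_half].
rewrite /strain_energy_hat /strain_energy mulrAC.
apply: (Rintegral_dist_le mu_fin _ _ (energy_density_le g0 Ebar_le C_le alpha)
  (density_near alpha alpha_delta alpha_half)).
- apply: measurable_funM; last first.
    exact: measurable_vol_ratio c_gt0 g0_sym g0_coercive g0_meas Ebar_meas alpha.
  apply: measurable_funM => //.
  exact: measurable_tcontract (Chat_meas alpha)
    (measurable_strain_hat g0 Ebar_meas alpha).
- apply: measurable_funM => //.
  exact: measurable_tcontract C_meas (measurable_strain g0 Ebar_meas alpha).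
Qed.
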